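(* For $n\ge2$, the group $VSPG_n$ is representable as the semi-direct product $VSPG_n=VS_{n-1}^*\rtimes VSPG_{n-1}=VS_{n-1}^*\rtimes\big(VS_{n-2}^*\rtimes(\cdots\rtimes(VS_2^*\rtimes VS_1^* )\cdots)\big)$, where $VS_{k-1}^*$, for $3\le k\le n$, are infinitely generated subgroups of $VSPG_n$, and $VS_1^*$ is a subgroup of rank $4$ (generated by $\mu_{12},\mu_{21},\gamma_{12},\gamma_{21}$).
   Context: $VSPG_n$ is the group generated by $\{\mu_{ij},\gamma_{ij}\mid 1\le i\ne j\le n\}$ with defining relations (distinct letters denote distinct indices): $\mu_{ij}\mu_{ik}\mu_{jk}=\mu_{jk}\mu_{ik}\mu_{ij}$; $\mu_{ij}\mu_{ik}\gamma_{jk}=\gamma_{jk}\mu_{ik}\mu_{ij}$; $\gamma_{ij}\mu_{ik}\mu_{jk}=\mu_{jk}\mu_{ik}\gamma_{ij}$; $\mu_{ij}\gamma_{ji}=\gamma_{ij}\mu_{ji}$; $\mu_{ij}\mu_{kl}=\mu_{kl}\mu_{ij}$, $\gamma_{ij}\gamma_{kl}=\gamma_{kl}\gamma_{ij}$, $\mu_{ij}\gamma_{kl}=\gamma_{kl}\mu_{ij}$ (the virtual singular pure braid group, i.e. the kernel of the permutation homomorphism on the virtual singular braid group $VSG_n$). For $k<n$, $VSPG_k$ is identified with the subgroup of $VSPG_n$ generated by $\mu_{ij},\gamma_{ij}$ with $i,j\le k$. For $2\le i\le n$, $VS_{i-1}$ is the subgroup generated by $\mu_{1i},\dots,\mu_{i-1,i},\mu_{i1},\dots,\mu_{i,i-1},\gamma_{1i},\dots,\gamma_{i-1,i},\gamma_{i1},\dots,\gamma_{i,i-1}$,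 and $VS_{i-1}^*$ is the normal closure of $VS_{i-1}$ in $VSPG_i$; $VSPG_2=VS_1=VS_1^*$. *)

(* The group VSPG_n is given by its presentation:
   elements are words over signed letters modulo the congruence generated by
   free cancellation and the defining relations of VSPG_n. *)
From mathcomp Require Import all_boot.
Set Implicit Arguments. Unset Strict Implicit. Unset Printing Implicit Defensive.

(* a letter (b, i, j): b = true is mu_ij, b = false is gamma_ij (indices 1-based) *)
Definition letter := (bool * nat * nat)%type.
(* a signed letter (e, x): e = true is x, e = false is x^-1 *)
Definition sletter := (bool * letter)%type.
Definition word := seq sletter.

Definition inv_letter (x : sletter) : sletter := (~~ x.1, x.2).
Definition inv_word (w : word) : word := rev (map inv_letter w).

Definition gen (b : bool) (i j : nat) : word := [:: (true, (b, i, j))].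
Definition mu (i j : nat) : word := gen true i j.
Definition ga (i j : nat) : word := gen false i j.

Definition idx_ok (n i : nat) : bool := (1 <= i <= n).

Inductive vspg_rel (n : nat) : word -> word -> Prop :=
| R_mmm i j k : all (idx_ok n) [:: i; j; k] -> uniq [:: i; j; k] ->
    vspg_rel n (mu i j ++ mu i k ++ mu j k) (mu j k ++ mu i k ++ mu i j)
| R_mmg i j k : all (idx_ok n) [:: i; j; k] -> uniq [:: i; j; k] ->
    vspg_rel n (mu i j ++ mu i k ++ ga j k) (ga j k ++ mu i k ++ mu i j)
| R_gmm i j k : all (idx_ok n) [:: i; j; k] -> uniq [:: i; j; k] ->
    vspg_rel n (ga i j ++ mu i k ++ mu j k) (mu j k ++ mu i k ++ ga i j)
| R_mg i j : all (idx_ok n) [:: i; j] -> uniq [:: i; j] ->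
    vspg_rel n (mu i j ++ ga j i) (ga i j ++ mu j i)
| R_mm i j k l : all (idx_ok n) [:: i; j; k; l] -> uniq [:: i; j; k; l] ->
    vspg_rel n (mu i j ++ mu k l) (mu k l ++ mu i j)
| R_gg i j k l : all (idx_ok n) [:: i; j; k; l] -> uniq [:: i; j; k; l] ->
    vspg_rel n (ga i j ++ ga k l) (ga k l ++ ga i j)
| R_mg4 i j k l : all (idx_ok n) [:: i; j; k; l] -> uniq [:: i; j; k; l] ->
    vspg_rel n (mu i j ++ ga k l) (ga k l ++ mu i j).

Inductive eqv (n : nat) : word -> word -> Prop :=
| eqv_refl w : eqv n w w
| eqv_sym u v : eqv n u v -> eqv n v u
| eqv_trans u v w : eqv n u v -> eqv n v w -> eqv n u w
| eqv_ctx a b u v : eqv n u v -> eqv n (a ++ u ++ b) (a ++ v ++ b)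
| eqv_free x : eqv n [:: x; inv_letter x] [::]
| eqv_rel u v : vspg_rel n u v -> eqv n u v.

Inductive span (n : nat) (S : word -> Prop) : word -> Prop :=
| span_nil : span n S [::]
| span_cons s w : S s -> span n S w -> span n S (s ++ w)
| span_inv s w : S s -> span n S w -> span n S (inv_word s ++ w)
| span_eqv w w' : span n S w -> eqv n w w' -> span n S w'.

Definition VSPG_gen (k : nat) (w : word) : Prop :=
  exists b i j, [/\ idx_ok k i, idx_ok k j, i != j & w = gen b i j].

Definition VSPG (n k : nat) : word -> Prop := span n (VSPG_gen k).

(* generators of VS_m (m = i - 1): mu_{l,i}, mu_{i,l}, gamma_{l,i}, gamma_{i,l}, 1 <= l <= m *)
Definition VS_gen (m : nat) (w : word) : Prop :=
  exists b l, 1 <= l <= m /\ (w = gen b l m.+1 \/ w = gen b m.+1 l).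

(* VS_m^* = normal closure of VS_m in VSPG_{m+1}, viewed inside VSPG_n:
   generated by conjugates g s g^-1, g in VSPG_{m+1}, s a generator of VS_m *)
Definition VSstar_gen (n m : nat) (w : word) : Prop :=
  exists g s, [/\ VSPG n m.+1 g, VS_gen m s & w = g ++ s ++ inv_word g].

Definition VSstar (n m : nat) : word -> Prop := span n (VSstar_gen n m).

Definition semidirect (n : nat) (G N H : word -> Prop) : Prop :=
  [/\ (forall x, N x -> G x),
      (forall h, H h -> G h),
      (forall g x, G g -> N x -> N (g ++ x ++ inv_word g)),
      (forall x, N x -> H x -> eqv n x [::] )
    & (forall g, G g -> exists x h, [/\ N x, H h & eqv n g (x ++ h)])].

Definition fin_gen (n : nat) (N : word -> Prop) : Prop :=
  exists S : seq word, (forall s, s \in S -> N s) /\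
    (forall w, N w -> span n (fun s => s \in S) w).

(* Erasing every letter that involves the index k maps each defining relation
   either to itself or to a trivial identity, so it induces a retraction of
   VSPG_k onto VSPG_{k-1}.  The retraction kills the normal subgroup VS_{k-1}^*,
   and every generator of VSPG_k lies in VS_{k-1} or in VSPG_{k-1}; this gives
   the semidirect decomposition.

   For k >= 3, sending gamma_12 and gamma_21 to the step of the lamplighter,
   gamma_1k and gamma_k1 to the lamp at the origin, and every other generator
   to 1 defines a homomorphism VSPG_n -> Z wr Z.  It maps VS_{k-1}^* into the
   base group and gamma_12^p gamma_1k gamma_12^-p to the lamp at position p,
   whereas finitely many elements of the base group only generate lamps in a
   bounded window.  So VS_{k-1}^* is not finitely generated.

   Finally VSPG_2 = VS_1, so VS_1^* = VS_1. *)

From mathcomp Require Import all_boot zify.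
From Stdlib Require Import ZArith FunctionalExtensionality.
Set Implicit Arguments. Unset Strict Implicit. Unset Printing Implicit Defensive.

Section WordGroup.
Variable n : nat.

Lemma eqv_cat u u' v v' : eqv n u u' -> eqv n v v' -> eqv n (u ++ v) (u' ++ v').
Proof.
move=> Hu Hv; apply: (@eqv_trans _ _ (u' ++ v)).
  by have := eqv_ctx [::] v Hu.
by have := eqv_ctx u' [::] Hv; rewrite !cats0.
Qed.

Lemma inv_letterK : involutive inv_letter.
Proof. by case=> e x; rewrite /inv_letter /= negbK. Qed.

Lemma inv_wordK : involutive inv_word.
Proof.
by move=> w; rewrite /inv_word map_rev revK -map_comp (eq_map inv_letterK) map_id.
Qed.

Lemma inv_word_cat u v : inv_word (u ++ v) = inv_word v ++ inv_word u.
Proof. by rewrite /inv_word map_cat rev_cat. Qed.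

Lemma eqv_catV w : eqv n (w ++ inv_word w) [::].
Proof.
elim: w => [|x w IH]; first exact: eqv_refl.
have -> : (x :: w) ++ inv_word (x :: w) = [:: x] ++ (w ++ inv_word w) ++ [:: inv_letter x].
  by rewrite -cat1s inv_word_cat !catA.
exact: eqv_trans (eqv_ctx [:: x] [:: inv_letter x] IH) (eqv_free n x).
Qed.

Lemma eqv_Vcat w : eqv n (inv_word w ++ w) [::].
Proof. by have := eqv_catV (inv_word w); rewrite inv_wordK. Qed.

Lemma eqv_inv_word u v : eqv n u v -> eqv n (inv_word u) (inv_word v).
Proof.
move=> Huv; apply: (@eqv_trans _ _ (inv_word u ++ (u ++ inv_word v))).
  rewrite -{1}[inv_word u]cats0; apply: eqv_cat (eqv_refl _ _) _.
  exact: eqv_trans (eqv_sym (eqv_catV v)) (eqv_cat (eqv_sym Huv) (eqv_refl _ _)).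
by rewrite catA; have := eqv_cat (eqv_Vcat u) (eqv_refl n (inv_word v)).
Qed.

Variable S : word -> Prop.

Lemma span_cat u v : span n S u -> span n S v -> span n S (u ++ v).
Proof.
move=> Su Sv; elim: Su => {u} [|s w Ss _ IH|s w Ss _ IH|w w' _ IH Hw] //.
- by rewrite -catA; apply: span_cons.
- by rewrite -catA; apply: span_inv.
- by apply: span_eqv IH _; apply: eqv_cat => //; apply: eqv_refl.
Qed.

Lemma span_mem s : S s -> span n S s.
Proof. by move=> Ss; have := span_cons Ss (span_nil n S); rewrite cats0. Qed.

Lemma span_inv_word w : span n S w -> span n S (inv_word w).
Proof.
elim=> {w} [|s w Ss _ IH|s w Ss _ IH|w w' _ IH Hw].
- exact: span_nil.
- by rewrite inv_word_cat; apply: span_cat IH _; have := span_inv Ss (span_nil n S); rewrite cats0.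
- by rewrite inv_word_cat inv_wordK; apply: span_cat IH (span_mem Ss).
- by apply: span_eqv IH _; apply: eqv_inv_word.
Qed.

Lemma span_conj g w : span n S g -> span n S w -> span n S (g ++ w ++ inv_word g).
Proof. by move=> Sg Sw; apply: span_cat Sg (span_cat Sw (span_inv_word Sg)). Qed.

Lemma span_nseq x p : S [:: x] -> span n S (nseq p x).
Proof. by move=> Sx; elim: p => [|p IH]; [apply: span_nil | apply: (span_cons Sx IH)]. Qed.

End WordGroup.

Lemma span_sub n (S T : word -> Prop) w :
  (forall s, S s -> span n T s) -> span n S w -> span n T w.
Proof.
move=> ST; elim=> {w} [|s w Ss _ IH|s w Ss _ IH|w w' _ IH Hw].
- exact: span_nil.
- exact: span_cat (ST _ Ss) IH.
- exact: span_cat (span_inv_word (ST _ Ss)) IH.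
- exact: span_eqv IH Hw.
Qed.

Section Erase.
Variable p : nat.

Definition touches (x : sletter) : bool := (x.2.1.2 == p) || (x.2.2 == p).

Definition erase (w : word) : word := [seq x <- w | ~~ touches x].

Lemma erase_cat u v : erase (u ++ v) = erase u ++ erase v.
Proof. exact: filter_cat. Qed.

Lemma erase_inv_word w : erase (inv_word w) = inv_word (erase w).
Proof. by rewrite /erase /inv_word filter_rev filter_map. Qed.

(* As soon as one index of a relation equals p, both sides erase to the same word. *)
Lemma erase_rel n u v : vspg_rel n u v -> eqv n (erase u) (erase v).
Proof.
move=> rel; case: rel (rel) => {u v} [i j l|i j l|i j l|i j|i j l q|i j l q|i j l q] _ _ rel;
  rewrite /erase /touches /=;
  repeat match goal with |- context [?x == p] => case: (x == p) end;
  by [apply: eqv_refl | apply: eqv_rel].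
Qed.

Lemma erase_eqv n u v : eqv n u v -> eqv n (erase u) (erase v).
Proof.
elim=> {u v} [w|u v _ /eqv_sym //|u v w _ IHuv _ IHvw|a b u v _ IH|x|u v /erase_rel //].
- exact: eqv_refl.
- exact: eqv_trans IHuv IHvw.
- by rewrite !erase_cat; apply: eqv_ctx.
- rewrite /erase /= -[touches (inv_letter x)]/(touches x).
  by case: (touches x); [apply: eqv_refl | apply: eqv_free].
Qed.

End Erase.

Section Semidirect.
Variables n m : nat.

Lemma VS_gen_VSPG_gen s : VS_gen m s -> VSPG_gen m.+1 s.
Proof.
case=> b [l [Hl [->|->]]]; exists b.
- by exists l, m.+1; split => //; rewrite /idx_ok; lia.
- by exists m.+1, l; split => //; rewrite /idx_ok; lia.
Qed.

Lemma VSPG_gen_widen s : VSPG_gen m s -> VSPG_gen m.+1 s.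
Proof.
case=> b [i [j [Hi Hj Hij ->]]]; exists b, i, j.
by split => //; move: Hi Hj; rewrite /idx_ok; lia.
Qed.

Lemma VSPG_genS s : VSPG_gen m.+1 s -> VS_gen m s \/ VSPG_gen m s.
Proof.
case=> b [i [j [Hi Hj Hij ->]]].
have [Ei|Ei] := eqVneq i m.+1.
  by left; exists b, j; split; [move: Hj Hij; rewrite /idx_ok Ei; lia | right; rewrite Ei].
have [Ej|Ej] := eqVneq j m.+1.
  by left; exists b, i; split; [move: Hi Hij; rewrite /idx_ok Ej; lia | left; rewrite Ej].
by right; exists b, i, j; split => //; move: Hi Hj Ei Ej; rewrite /idx_ok; lia.
Qed.

Lemma VSPG_widen w : VSPG n m w -> VSPG n m.+1 w.
Proof. by apply: span_sub => s /VSPG_gen_widen; apply: span_mem. Qed.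

Lemma VSstar_VSPG w : VSstar n m w -> VSPG n m.+1 w.
Proof.
apply: span_sub => _ [g [s [Hg Hs ->]]].
exact: span_conj Hg (span_mem _ (VS_gen_VSPG_gen Hs)).
Qed.

Lemma eqv_conj_cat g u v :
  eqv n ((g ++ u ++ inv_word g) ++ g ++ v ++ inv_word g) (g ++ (u ++ v) ++ inv_word g).
Proof.
have := eqv_ctx (g ++ u) (v ++ inv_word g) (eqv_Vcat n g).
by rewrite cat0s !catA.
Qed.

Lemma VSstar_conj g w :
  VSPG n m.+1 g -> VSstar n m w -> VSstar n m (g ++ w ++ inv_word g).
Proof.
move=> Hg; have conj_gen s : VSstar_gen n m s -> VSstar_gen n m (g ++ s ++ inv_word g).
  case=> g0 [s0 [Hg0 Hs0 ->]]; exists (g ++ g0), s0.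
  by split => //; [apply: span_cat | rewrite inv_word_cat !catA].
elim=> {w} [|s w Hs _ IH|s w Hs _ IH|w w' _ IH Hw].
- exact: span_eqv (span_nil _ _) (eqv_sym (eqv_catV n g)).
- exact: span_eqv (span_cons (conj_gen _ Hs) IH) (eqv_conj_cat _ _ _).
- apply: span_eqv (eqv_conj_cat _ _ _).
  by have := span_inv (conj_gen _ Hs) IH; rewrite !inv_word_cat inv_wordK !catA.
- exact: span_eqv IH (eqv_ctx _ _ Hw).
Qed.

Lemma erase_VSstar w : VSstar n m w -> eqv n (erase m.+1 w) [::].
Proof.
have erase_gen s : VSstar_gen n m s -> eqv n (erase m.+1 s) [::].
  case=> g [s0 [_ [b [l [_ Hs0]]] ->]].
  rewrite !erase_cat erase_inv_word.
  have -> : erase m.+1 s0 = [::] by case: Hs0 => ->; rewrite /erase /touches /= eqxx ?orbT.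
  exact: eqv_catV.
elim=> {w} [|s w Hs _ IH|s w Hs _ IH|w w' _ IH Hw].
- exact: eqv_refl.
- by rewrite erase_cat; apply: eqv_cat (erase_gen _ Hs) IH.
- by rewrite erase_cat erase_inv_word; apply: eqv_cat (eqv_inv_word (erase_gen _ Hs)) IH.
- exact: eqv_trans (eqv_sym (erase_eqv _ Hw)) IH.
Qed.

Lemma erase_VSPG w : VSPG n m w -> eqv n (erase m.+1 w) w.
Proof.
have erase_gen s : VSPG_gen m s -> erase m.+1 s = s.
  case=> b [i [j [Hi Hj _ ->]]]; move: Hi Hj; rewrite /idx_ok /erase /touches /= => Hi Hj.
  by have -> : (i == m.+1) || (j == m.+1) = false by lia.
elim=> {w} [|s w Hs _ IH|s w Hs _ IH|w w' _ IH Hw].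
- exact: eqv_refl.
- by rewrite erase_cat erase_gen //; apply: eqv_cat (eqv_refl _ _) IH.
- by rewrite erase_cat erase_inv_word erase_gen //; apply: eqv_cat (eqv_refl _ _) IH.
- exact: eqv_trans (eqv_trans (eqv_sym (erase_eqv _ Hw)) IH) Hw.
Qed.

Lemma VSstar_VSPG_trivial w : VSstar n m w -> VSPG n m w -> eqv n w [::].
Proof. by move=> /erase_VSstar Nw /erase_VSPG Hw; apply: eqv_trans (eqv_sym Hw) Nw. Qed.

Lemma VS_gen_VSstar s : VS_gen m s -> VSstar n m s.
Proof. by move=> Hs; apply: span_mem; exists [::], s; split => //; [apply: span_nil | rewrite cats0]. Qed.

Lemma VSPG_genS_split s : VSPG_gen m.+1 s -> VSstar n m s \/ VSPG n m s.
Proof. by case/VSPG_genS=> Hs; [left; apply: VS_gen_VSstar | right; apply: span_mem]. Qed.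

Lemma VSPG_decomp_cat t w :
  VSstar n m t \/ VSPG n m t ->
  (exists x h, [/\ VSstar n m x, VSPG n m h & eqv n w (x ++ h)]) ->
  exists x h, [/\ VSstar n m x, VSPG n m h & eqv n (t ++ w) (x ++ h)].
Proof.
move=> Ht [x [h [Nx Hh E]]]; have tE := eqv_cat (eqv_refl n t) E.
case: Ht => [Nt|Ht].
  by exists (t ++ x), h; split; [apply: span_cat | | rewrite -catA].
exists (t ++ x ++ inv_word t), (t ++ h); split.
- exact: VSstar_conj (VSPG_widen Ht) Nx.
- exact: span_cat.
- apply: eqv_trans tE _.
  by have := eqv_ctx (t ++ x) h (eqv_sym (eqv_Vcat n t)); rewrite cat0s !catA.
Qed.

Lemma VSPG_decomp g : VSPG n m.+1 g ->
  exists x h, [/\ VSstar n m x, VSPG n m h & eqv n g (x ++ h)].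
Proof.
elim=> {g} [|s w /VSPG_genS_split Hs _ IH|s w /VSPG_genS_split Hs _ IH|w w' _ IH Hw].
- by exists [::], [::]; split; [apply: span_nil | apply: span_nil | apply: eqv_refl].
- exact: VSPG_decomp_cat.
- by apply: VSPG_decomp_cat IH; case: Hs => Hs; [left | right]; apply: span_inv_word.
- case: IH => x [h [Nx Hh E]].
  by exists x, h; split => //; apply: eqv_trans E; apply: eqv_sym.
Qed.

Lemma VSPG_semidirect : semidirect n (VSPG n m.+1) (VSstar n m) (VSPG n m).
Proof.
split.
- exact: VSstar_VSPG.
- exact: VSPG_widen.
- exact: VSstar_conj.
- exact: VSstar_VSPG_trivial.
- exact: VSPG_decomp.
Qed.

End Semidirect.

(* The lamplighter group Z wr Z: [a.1] is the lamp configuration and [a.2] the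
   position of the lamplighter. *)
Definition lamp := ((Z -> Z) * Z)%type.

Definition lamp1 : lamp := (fun _ => 0%Z, 0%Z).
Definition lamp_mul (a b : lamp) : lamp := (fun d => a.1 d + b.1 (d - a.2), a.2 + b.2)%Z.
Definition lamp_inv (a : lamp) : lamp := (fun d => - a.1 (d + a.2), - a.2)%Z.
Definition lamp_shift (z : Z) : lamp := (fun _ => 0%Z, z).
Definition lamp_bulb : lamp := (fun d => if Z.eqb d 0 then 1 else 0, 0)%Z.

Lemma lamp_mul1l a : lamp_mul lamp1 a = a.
Proof.
case: a => f z; rewrite /lamp_mul /=; congr pair.
by apply: functional_extensionality => d; rewrite Z.sub_0_r.
Qed.

Lemma lamp_mul1r a : lamp_mul a lamp1 = a.
Proof.
case: a => f z; rewrite /lamp_mul /=; congr pair; last by rewrite Z.add_0_r.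
by apply: functional_extensionality => d; rewrite Z.add_0_r.
Qed.

Lemma lamp_mulA a b c : lamp_mul a (lamp_mul b c) = lamp_mul (lamp_mul a b) c.
Proof.
rewrite /lamp_mul /=; congr pair; last by rewrite Z.add_assoc.
by apply: functional_extensionality => d; rewrite Z.sub_add_distr Z.add_assoc.
Qed.

Lemma lamp_mulV a : lamp_mul a (lamp_inv a) = lamp1.
Proof.
rewrite /lamp_mul /=; congr pair; last by rewrite Z.add_opp_diag_r.
by apply: functional_extensionality => d; rewrite Z.sub_add Z.add_opp_diag_r.
Qed.

Lemma lamp_mulVl a : lamp_mul (lamp_inv a) a = lamp1.
Proof.
rewrite /lamp_mul /=; congr pair; last by rewrite Z.add_opp_diag_l.
by apply: functional_extensionality => d; rewrite Z.sub_opp_r Z.add_opp_diag_l.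
Qed.

Lemma lamp_inv_unique a b : lamp_mul a b = lamp1 -> b = lamp_inv a.
Proof. by move=> ab1; rewrite -[b]lamp_mul1l -(lamp_mulVl a) -lamp_mulA ab1 lamp_mul1r. Qed.

Lemma lamp_shiftD x y : lamp_mul (lamp_shift x) (lamp_shift y) = lamp_shift (x + y).
Proof. by []. Qed.

Definition edge (a b i j : nat) : bool := ((i == a) && (j == b)) || ((i == b) && (j == a)).

Lemma edgeC a b i j : edge a b j i = edge a b i j.
Proof. by rewrite /edge orbC andbC [(j == a) && _]andbC. Qed.

Section LampWord.
Variable k : nat.

Definition lamp_gen (x : letter) : lamp :=
  let: (b, i, j) := x in
  if b then lamp1
  else if edge 1 2 i j then lamp_shift 1
  else if edge 1 k i j then lamp_bulb
  else lamp1.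

Definition lamp_sletter (x : sletter) : lamp :=
  if x.1 then lamp_gen x.2 else lamp_inv (lamp_gen x.2).

Definition lamp_word (w : word) : lamp := foldr (fun x => lamp_mul (lamp_sletter x)) lamp1 w.

Lemma lamp_word_cat u v : lamp_word (u ++ v) = lamp_mul (lamp_word u) (lamp_word v).
Proof. by elim: u => [|x u IH] /=; rewrite ?lamp_mul1l // IH lamp_mulA. Qed.

Lemma lamp_word_gen b i j : lamp_word (gen b i j) = lamp_gen (b, i, j).
Proof. exact: lamp_mul1r. Qed.

Lemma lamp_gen_mu i j : lamp_gen (true, i, j) = lamp1.
Proof. by []. Qed.

Lemma lamp_gen_away1 i j : i != 1 -> j != 1 -> lamp_gen (false, i, j) = lamp1.
Proof. by move=> /negbTE i1 /negbTE j1; rewrite /lamp_gen /edge i1 j1 !andbF. Qed.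

Lemma lamp_gen_swap i j : lamp_gen (false, j, i) = lamp_gen (false, i, j).
Proof. by rewrite /lamp_gen edgeC [edge 1 k j i]edgeC. Qed.

Lemma lamp_word_rel n u v : vspg_rel n u v -> lamp_word u = lamp_word v.
Proof.
case=> {u v} [i j l|i j l|i j l|i j|i j l q|i j l q|i j l q] _ uniq_idx;
  rewrite !lamp_word_cat !lamp_word_gen ?lamp_gen_mu ?lamp_mul1l ?lamp_mul1r //.
- exact: lamp_gen_swap.
- have : ((i != 1) && (j != 1)) || ((l != 1) && (q != 1)).
    by move: uniq_idx; rewrite /= !inE; lia.
  case/orP=> /andP[? ?]; [rewrite (@lamp_gen_away1 i j) | rewrite (@lamp_gen_away1 l q)] => //;
    by rewrite lamp_mul1l lamp_mul1r.
Qed.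

Lemma lamp_word_eqv n u v : eqv n u v -> lamp_word u = lamp_word v.
Proof.
elim=> {u v} // [u v w _ -> _ -> //|a b u v _ IH|[[] x]|u v /lamp_word_rel //].
- by rewrite !lamp_word_cat IH.
- by rewrite /= lamp_mul1r lamp_mulV.
- by rewrite /= lamp_mul1r lamp_mulVl.
Qed.

Lemma lamp_word_inv_word w : lamp_word (inv_word w) = lamp_inv (lamp_word w).
Proof. by apply: lamp_inv_unique; rewrite -lamp_word_cat (lamp_word_eqv (eqv_catV 0 w)). Qed.

Lemma lamp_sletter_local x :
  (forall d, d <> 0%Z -> (lamp_sletter x).1 d = 0%Z) /\ (-1 <= (lamp_sletter x).2 <= 1)%Z.
Proof.
case: x => e [[b i] j]; rewrite /lamp_sletter /lamp_gen /=.
case: e; case: b => //=; case: (edge 1 2 i j); case: (edge 1 k i j) => /=;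
  split => [d d0|]; rewrite ?Z.add_0_r; try case: Z.eqb_spec; lia.
Qed.

Lemma lamp_word_support w d : (Z.of_nat (size w) < d)%Z -> (lamp_word w).1 d = 0%Z.
Proof.
elim: w d => [|x w IH] d //= Hd; have [x_local x_step] := lamp_sletter_local x.
by rewrite x_local ?IH; lia.
Qed.

Lemma lamp_word_span n (S : word -> Prop) (P : lamp -> Prop) :
  P lamp1 -> (forall a b, P a -> P b -> P (lamp_mul a b)) ->
  (forall a, P a -> P (lamp_inv a)) -> (forall s, S s -> P (lamp_word s)) ->
  forall w, span n S w -> P (lamp_word w).
Proof.
move=> P1 PM PV PS w; elim=> {w} [|s w Ss _ IH|s w Ss _ IH|w w' _ IH Hw] //.
- by rewrite lamp_word_cat; apply: PM => //; apply: PS.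
- by rewrite lamp_word_cat lamp_word_inv_word; apply: PM => //; apply/PV/PS.
- by rewrite -(lamp_word_eqv Hw).
Qed.

End LampWord.

Section NotFinGen.
Variables n m : nat.
Hypothesis m_gt1 : 1 < m.

Lemma lamp_word_VS_gen s : VS_gen m s -> (lamp_word m.+1 s).2 = 0%Z.
Proof.
case=> b [l [_ Hs]].
have m1 : (m.+1 == 1) = false by case: m m_gt1.
have m2 : (m.+1 == 2) = false by case: m m_gt1 => [|[]].
by case: Hs => ->; rewrite lamp_word_gen /lamp_gen /edge m1 m2 ?andbF /=;
  case: b => //; case: ifP.
Qed.

Lemma lamp_word_VSstar w : VSstar n m w -> (lamp_word m.+1 w).2 = 0%Z.
Proof.
apply: (lamp_word_span (P := fun a => a.2 = 0%Z)) => //= [a b -> -> //|a -> //|].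
move=> _ [g [s [_ /lamp_word_VS_gen Hs ->]]].
by rewrite !lamp_word_cat lamp_word_inv_word /= Hs; lia.
Qed.

End NotFinGen.

Definition base_lamp_le (B : nat) (a : lamp) : Prop :=
  a.2 = 0%Z /\ forall d, (Z.of_nat B < d)%Z -> a.1 d = 0%Z.

Lemma base_lamp_le_mul B a b :
  base_lamp_le B a -> base_lamp_le B b -> base_lamp_le B (lamp_mul a b).
Proof.
move=> [a0 a_le] [b0 b_le]; split => [|d Bd] /=; first by rewrite a0 b0.
by rewrite a0 Z.sub_0_r a_le ?b_le.
Qed.

Lemma base_lamp_le_inv B a : base_lamp_le B a -> base_lamp_le B (lamp_inv a).
Proof. by move=> [a0 a_le]; split => [|d Bd] /=; rewrite a0 // Z.add_0_r a_le. Qed.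

Lemma lamp_word_fin_span n k (S : seq word) w :
  (forall s, s \in S -> (lamp_word k s).2 = 0%Z) ->
  span n (fun s => s \in S) w ->
  base_lamp_le (\max_(s <- S) size s) (lamp_word k w).
Proof.
move=> S0; apply: lamp_word_span => //; [exact: base_lamp_le_mul | exact: base_lamp_le_inv|].
move=> s Ss; split => [|d Bd]; first exact: S0.
apply: lamp_word_support; apply: Z.le_lt_trans Bd; apply/inj_le/leP.
by apply: leq_bigmax_seq.
Qed.

Lemma lamp_word_ga12_pow k p :
  lamp_word k (nseq p (true, (false, 1, 2))) = lamp_shift (Z.of_nat p).
Proof. by elim: p => [|p IH] //; rewrite /= IH lamp_shiftD; congr lamp_shift; lia. Qed.

Lemma lamp_word_conj_bulb k p (g := nseq p (true, (false, 1, 2))) : 2 < k ->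
  (lamp_word k (g ++ ga 1 k ++ inv_word g)).1 (Z.of_nat p) = 1%Z.
Proof.
move=> k_gt2; have k2 : (k == 2) = false by case: k k_gt2 => [|[|[]]].
rewrite !lamp_word_cat lamp_word_inv_word lamp_word_ga12_pow lamp_word_gen.
by rewrite /lamp_gen /edge k2 /= eqxx Z.sub_diag.
Qed.

Lemma VSstar_not_fin_gen n m : 1 < m -> ~ fin_gen n (VSstar n m).
Proof.
move=> m_gt1 [S [SN spanS]]; set B := \max_(s <- S) size s.
pose g := nseq B.+1 (true, (false, 1, 2)).
have Ng : VSstar n m (g ++ ga 1 m.+1 ++ inv_word g).
  apply: span_mem; exists g, (ga 1 m.+1); split => //.
    by apply: span_nseq; exists false, 1, 2; split => //; rewrite /idx_ok; lia.
  by exists false, 1; split; [lia | left].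
have S0 s (Ss : s \in S) := lamp_word_VSstar m_gt1 (SN s Ss).
have [_ /(_ (Z.of_nat B.+1))] := lamp_word_fin_span S0 (spanS _ Ng).
by rewrite lamp_word_conj_bulb //; lia.
Qed.

Definition VS1_gens : seq word := [:: mu 1 2; mu 2 1; ga 1 2; ga 2 1].

Lemma VS_gen1P s : VS_gen 1 s <-> s \in VS1_gens.
Proof.
split=> [[b [l [Hl Hs]]]|].
  move: Hs; have -> : l = 1 by lia.
  by case=> ->; case: b.
rewrite !inE => /or4P[] /eqP->; [exists true | exists true | exists false | exists false];
  exists 1; split => //; by [left | right].
Qed.

Lemma VSPG_gen2_VS_gen1 s : VSPG_gen 2 s -> VS_gen 1 s.
Proof. by case/VSPG_genS => // [[b [i [j [Hi Hj ij _]]]]]; move: Hi Hj ij; rewrite /idx_ok; lia. Qed.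

Lemma VSstar1 n w : VSstar n 1 w <-> span n (fun s => s \in VS1_gens) w.
Proof.
split; apply: span_sub.
- move=> _ [g [s [Hg Hs ->]]]; apply: span_conj; last by apply/span_mem/VS_gen1P.
  by apply: span_sub Hg => t /VSPG_gen2_VS_gen1 /VS_gen1P; apply: span_mem.
- by move=> s /VS_gen1P; apply: VS_gen_VSstar.
Qed.

Theorem mainTheorem12 (n : nat) : 2 <= n ->
  (forall k, 2 <= k <= n ->
     semidirect n (VSPG n k) (VSstar n k.-1) (VSPG n k.-1)) /\
  (forall k, 3 <= k <= n -> ~ fin_gen n (VSstar n k.-1)) /\
  (forall w, VSstar n 1 w <->
     span n (fun s => s \in [:: mu 1 2; mu 2 1; ga 1 2; ga 2 1]) w).
Proof.
move=> _; split; [|split].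
- by case=> [|m] // _; apply: VSPG_semidirect.
- by case=> [|m] k_ge3; [|apply: VSstar_not_fin_gen]; lia.
- exact: VSstar1.
Qed.
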